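(* Let $(\Omega=\mathcal{A}\otimes\bigwedge(\mathbb{C}^2),\mathrm{d},\bar{\mathrm{d}})$ be a bidifferential graded algebra with $\mathcal{A}=\mathrm{Mat}_{n_0}(\mathcal{B})$, $\mathcal{B}$ a unital complex algebra, $n_0\in\mathbb{N}$, and $\mathrm{d},\bar{\mathrm{d}}$ respecting matrix sizes. Let $n,m\ge n_0$ and let $\mathbf{P},\hat{\mathbf{K}}\in\mathrm{Mat}(n,n,\mathcal{B})$, $\mathbf{V}\in\mathrm{Mat}(n,m,\mathcal{B})$, $\hat{\mathbf{U}}\in\mathrm{Mat}(m,n,\mathcal{B})$ be $\mathrm{d}$- and $\bar{\mathrm{d}}$-constant. Let $\hat{\mathbf{\Xi}}\in\mathrm{Mat}(n,n,\mathcal{B})$ satisfy $$\bar{\mathrm{d}}\hat{\mathbf{\Xi}}=(\mathrm{d}\hat{\mathbf{\Xi}})\,\mathbf{P}\qquad\text{and}\qquad [\mathbf{P},\hat{\mathbf{K}}\hat{\mathbf{\Xi}}]=\mathbf{V}\hat{\mathbf{U}}\hat{\mathbf{\Xi}}.$$ If $\mathbf{I}-\hat{\mathbf{K}}\hat{\mathbf{\Xi}}$ is invertible, then $\phi=\hat{\mathbf{U}}\,\hat{\mathbf{\Xi}}\,(\mathbf{I}-\hat{\mathbf{K}}\hat{\mathbf{\Xi}})^{-1}\mathbf{V}$ solves $\bar{\mathrm{d}}\mathrm{d}\phi=\mathrm{d}\phi\,\mathrm{d}\phi$.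
   Context: A bidifferential graded algebra is a graded algebra $\Omega=\bigoplus_{r\ge0}\Omega^r$ with two degree-one linear maps $\mathrm{d},\bar{\mathrm{d}}$ satisfying $\mathrm{d}^2=\bar{\mathrm{d}}^2=\mathrm{d}\bar{\mathrm{d}}+\bar{\mathrm{d}}\mathrm{d}=0$ and the graded Leibniz rule. $\mathrm{Mat}_{n_0}(\mathcal{B}):=\bigoplus_{n',n\ge n_0}\mathrm{Mat}(n',n,\mathcal{B})$ with the matrix product extended by zero for non-matching sizes; elements of $\bigwedge(\mathbb{C}^2)$ are constants; ''respecting matrix sizes'' means $\mathrm{d},\bar{\mathrm{d}}$ map $\mathrm{Mat}(n',n,\mathcal{B})\otimes\bigwedge(\mathbb{C}^2)$ into itself. $\mathrm{d}$- and $\bar{\mathrm{d}}$-constant means annihilated by both maps. $\mathbf{I}=I_n$. *)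

From HB Require Import structures.
From mathcomp Require Import all_boot all_order all_algebra.
Set Implicit Arguments. Unset Strict Implicit. Unset Printing Implicit Defensive.
Import Order.TTheory GRing.Theory.
Local Open Scope ring_scope.

(* An element of  Mat(p,q,B) (x) /\(F^2)  is written uniquely as
     x0 + x1 xi1 + x2 xi2 + x12 xi1 xi2
   with x0,x1,x2,x12 in Mat(p,q,B); the generators xi1, xi2 of the exterior
   algebra commute with B-matrices and anticommute with each other. *)
Section ExtAlg.
Variables (F : fieldType) (B : algType F).

Record ext (p q : nat) := Ext {
  e0 : 'M[B]_(p, q); e1 : 'M[B]_(p, q); e2 : 'M[B]_(p, q); e12 : 'M[B]_(p, q) }.

Definition ezero p q : ext p q := Ext 0 0 0 0.
Definition eadd p q (x y : ext p q) : ext p q :=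
  Ext (e0 x + e0 y) (e1 x + e1 y) (e2 x + e2 y) (e12 x + e12 y).
Definition eopp p q (x : ext p q) : ext p q :=
  Ext (- e0 x) (- e1 x) (- e2 x) (- e12 x).
Definition mscale p q (c : F) (A : 'M[B]_(p, q)) : 'M[B]_(p, q) :=
  map_mx (fun b => c *: b) A.
Definition escale p q (c : F) (x : ext p q) : ext p q :=
  Ext (mscale c (e0 x)) (mscale c (e1 x)) (mscale c (e2 x)) (mscale c (e12 x)).

(* product of Mat(p,q) (x) /\ by Mat(q,r) (x) /\ ; xi2 xi1 = - xi1 xi2 *)
Definition emul p q r (x : ext p q) (y : ext q r) : ext p r :=
  Ext (e0 x *m e0 y)
      (e0 x *m e1 y + e1 x *m e0 y)
      (e0 x *m e2 y + e2 x *m e0 y)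
      (e0 x *m e12 y + e12 x *m e0 y + e1 x *m e2 y - e2 x *m e1 y).

Definition emb p q (a : 'M[B]_(p, q)) : ext p q := Ext a 0 0 0.

(* right multiplication by the generators xi1, xi2 *)
Definition exi1 p q (x : ext p q) : ext p q := Ext 0 (e0 x) 0 (- e2 x).
Definition exi2 p q (x : ext p q) : ext p q := Ext 0 0 (e0 x) (e1 x).

Definition ehom (r : nat) p q (x : ext p q) : Prop :=
  match r with
  | 0 => [/\ e1 x = 0, e2 x = 0 & e12 x = 0]
  | 1 => e0 x = 0 /\ e12 x = 0
  | 2 => [/\ e0 x = 0, e1 x = 0 & e2 x = 0]
  | _ => x = ezero p q
  end.

Definition esign (r : nat) p q (x : ext p q) : ext p q :=
  if odd r then eopp x else x.

(* A map D, defined on every block Mat(p,q,B) (x) /\ (so it respects matrix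
   sizes), which is a differential of the graded algebra Mat_{n0}(B) (x) /\:
   F-linear, of degree one, squaring to zero, satisfying the graded Leibniz
   rule, and annihilating the elements of /\(F^2) (i.e. it commutes with
   right multiplication by xi1, xi2). *)
Definition is_differential (n0 : nat) (D : forall p q, ext p q -> ext p q) : Prop :=
  ((forall p q (x y : ext p q), (n0 <= p)%N -> (n0 <= q)%N ->
         D p q (eadd x y) = eadd (D p q x) (D p q y)) /\
      (forall p q (c : F) (x : ext p q), (n0 <= p)%N -> (n0 <= q)%N ->
         D p q (escale c x) = escale c (D p q x)) /\
      (forall r p q (x : ext p q), (n0 <= p)%N -> (n0 <= q)%N ->
         ehom r x -> ehom r.+1 (D p q x)) /\
      (forall p q (x : ext p q), (n0 <= p)%N -> (n0 <= q)%N ->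
         D p q (D p q x) = ezero p q) /\
      (forall r p q s (x : ext p q) (y : ext q s),
         (n0 <= p)%N -> (n0 <= q)%N -> (n0 <= s)%N -> ehom r x ->
         D p s (emul x y) = eadd (emul (D p q x) y) (esign r (emul x (D q s y)))) /\
      (forall p q (x : ext p q), (n0 <= p)%N -> (n0 <= q)%N ->
         D p q (exi1 x) = exi1 (D p q x) /\ D p q (exi2 x) = exi2 (D p q x))).

Definition bidifferential (n0 : nat) (d db : forall p q, ext p q -> ext p q) : Prop :=
  [/\ is_differential n0 d, is_differential n0 db &
      forall p q (x : ext p q), (n0 <= p)%N -> (n0 <= q)%N ->
        eadd (d p q (db p q x)) (db p q (d p q x)) = ezero p q].

Definition dconst (d db : forall p q, ext p q -> ext p q) p q (a : 'M[B]_(p, q)) : Prop :=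
  d p q (emb a) = ezero p q /\ db p q (emb a) = ezero p q.

End ExtAlg.

From HB Require Import structures.
From mathcomp Require Import all_boot all_order all_algebra.
Set Implicit Arguments. Unset Strict Implicit. Unset Printing Implicit Defensive.
Import GRing.Theory.
Local Open Scope ring_scope.

(* On matrices, [d = d1 xi1 + d2 xi2] and [dbar = db1 xi1 + db2 xi2] with four derivations
   d1, d2, db1, db2, and both sides of the equation are multiples of [xi1 xi2].  Put
   [M = (1 - K Xi)^-1] and [N = (1 - Xi K)^-1]; any derivation [delta] killing K, U, V
   satisfies [delta phi = U N (delta Xi) M V].  Trading [dbar d phi] for [- d dbar phi],
   using [dbar Xi = (d Xi) P] and [d^2 = 0], the [xi1 xi2] coefficient reduces to terms
   [[P, M K (d_i Xi)]], which the hypothesis [[P, K Xi] = V U Xi] turns into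
   [M V U N (d_i Xi)]; these reassemble into [d1 phi d2 phi - d2 phi d1 phi]. *)

Section Differentials.
Variables (F : fieldType) (B : algType F) (n0 : nat).

Lemma ext_eq p q (x y : ext B p q) : e0 x = e0 y -> e1 x = e1 y -> e2 x = e2 y ->
  e12 x = e12 y -> x = y.
Proof. by case: x; case: y => /= ? ? ? ? ? ? ? ? -> -> -> ->. Qed.

Definition mx_derivation (delta : forall p q, 'M[B]_(p, q) -> 'M[B]_(p, q)) : Prop :=
  (forall p q (A C : 'M[B]_(p, q)), (n0 <= p)%N -> (n0 <= q)%N ->
     delta p q (A + C) = delta p q A + delta p q C) /\
  (forall p q s (A : 'M[B]_(p, q)) (C : 'M[B]_(q, s)),
     (n0 <= p)%N -> (n0 <= q)%N -> (n0 <= s)%N ->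
     delta p s (A *m C) = delta p q A *m C + A *m delta q s C).

(* For [a] of degree zero, [D a = dxi1 D a xi1 + dxi2 D a xi2]. *)
Definition dxi1 (D : forall p q, ext B p q -> ext B p q) p q (A : 'M[B]_(p, q)) :=
  e1 (D p q (emb A)).
Definition dxi2 (D : forall p q, ext B p q -> ext B p q) p q (A : 'M[B]_(p, q)) :=
  e2 (D p q (emb A)).

Section OneDifferential.
Variable D : forall p q, ext B p q -> ext B p q.
Hypothesis HD : is_differential n0 D.

Lemma differential_emb p q (A : 'M[B]_(p, q)) : (n0 <= p)%N -> (n0 <= q)%N ->
  D (emb A) = Ext 0 (dxi1 D A) (dxi2 D A) 0.
Proof.
move=> hp hq; have [_ [_ [Hdeg _]]] := HD.
by have [h0 h12] := Hdeg 0%N p q (emb A) hp hq (And3 erefl erefl erefl); apply: ext_eq.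
Qed.

Lemma dxi_derivation : mx_derivation (dxi1 D) /\ mx_derivation (dxi2 D).
Proof.
have [Hadd [_ [_ [_ [Hleib _]]]]] := HD.
have embD p q (A C : 'M[B]_(p, q)) : emb (A + C) = eadd (emb A) (emb C).
  by apply: ext_eq; rewrite /= ?addr0.
have embM p q s (A : 'M[B]_(p, q)) (C : 'M[B]_(q, s)) : emb (A *m C) = emul (emb A) (emb C).
  by apply: ext_eq; rewrite /= ?mulmx0 ?mul0mx ?addr0 ?subr0.
by do ![split] => * /=; rewrite /dxi1 /dxi2 ?embD ?embM ?Hadd ?(Hleib 0%N) //=
  ?differential_emb //= ?mulmx0 ?mul0mx ?addr0 ?add0r.
Qed.

Lemma emul_differential_emb p q s (A : 'M[B]_(p, q)) (C : 'M[B]_(q, s)) :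
  (n0 <= p)%N -> (n0 <= q)%N -> (n0 <= s)%N ->
  emul (D (emb A)) (D (emb C)) = Ext 0 0 0 (dxi1 D A *m dxi2 D C - dxi2 D A *m dxi1 D C).
Proof.
by move=> hp hq hs; rewrite !differential_emb //; apply: ext_eq;
  rewrite /= ?mulmx0 ?mul0mx ?addr0 ?add0r.
Qed.

Lemma dxi_emul_emb p q (A : 'M[B]_(p, q)) (C : 'M[B]_q)
    (D' : forall p q, ext B p q -> ext B p q) :
  (n0 <= p)%N -> (n0 <= q)%N -> D' p q (emb A) = emul (D (emb A)) (emb C) ->
  dxi1 D' A = dxi1 D A *m C /\ dxi2 D' A = dxi2 D A *m C.
Proof.
move=> hp hq hD'; rewrite /dxi1 /dxi2 hD' differential_emb //=.
by rewrite !mul0mx !add0r.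
Qed.

End OneDifferential.

Section TwoDifferentials.
Variables D D' : forall p q, ext B p q -> ext B p q.
Hypotheses (HD : is_differential n0 D) (HD' : is_differential n0 D').

Lemma differential_differential_emb p q (A : 'M[B]_(p, q)) :
  (n0 <= p)%N -> (n0 <= q)%N ->
  D' (D (emb A)) = Ext 0 0 0 (dxi1 D' (dxi2 D A) - dxi2 D' (dxi1 D A)).
Proof.
move=> hp hq; have [Hadd [_ [_ [_ [_ Hxi]]]]] := HD'.
have -> : D (emb A) = eadd (exi1 (emb (dxi1 D A))) (exi2 (emb (dxi2 D A))).
  by rewrite differential_emb //; apply: ext_eq; rewrite /= ?addr0 ?add0r ?oppr0.
rewrite Hadd //; have [-> _] := Hxi _ _ (emb (dxi1 D A)) hp hq.
have [_ ->] := Hxi _ _ (emb (dxi2 D A)) hp hq.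
rewrite !(differential_emb HD') //.
by apply: ext_eq; rewrite /= ?addr0 ?add0r // addrC.
Qed.

End TwoDifferentials.

Lemma dxi_comm (D : forall p q, ext B p q -> ext B p q) p q (A : 'M[B]_(p, q)) :
  is_differential n0 D -> (n0 <= p)%N -> (n0 <= q)%N ->
  dxi1 D (dxi2 D A) = dxi2 D (dxi1 D A).
Proof.
move=> HD hp hq; have [_ [_ [_ [HDD _]]]] := HD.
move/(congr1 (@e12 _ _ _ _)): (HDD p q (emb A) hp hq).
by rewrite differential_differential_emb //= => /eqP; rewrite subr_eq0 => /eqP.
Qed.

Lemma dconst_dxi (d db : forall p q, ext B p q -> ext B p q) p q (A : 'M[B]_(p, q)) :
  dconst d db A -> [/\ dxi1 d A = 0, dxi2 d A = 0, dxi1 db A = 0 & dxi2 db A = 0].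
Proof. by case=> hd hdb; rewrite /dxi1 /dxi2 hd hdb. Qed.

Lemma bidifferential_dxi_anticomm (d db : forall p q, ext B p q -> ext B p q)
    p q (A : 'M[B]_(p, q)) :
  bidifferential n0 d db -> (n0 <= p)%N -> (n0 <= q)%N ->
  dxi1 db (dxi2 d A) - dxi2 db (dxi1 d A) = dxi2 d (dxi1 db A) - dxi1 d (dxi2 db A).
Proof.
move=> [Hd Hdb Hanti] hp hq.
move/(congr1 (@e12 _ _ _ _)): (Hanti p q (emb A) hp hq).
rewrite /= !differential_differential_emb //= => /eqP.
by rewrite addrC addr_eq0 opprB => /eqP.
Qed.

End Differentials.

Section Derivation.
Variables (F : fieldType) (B : algType F) (n0 : nat).
Variable delta : forall p q, 'M[B]_(p, q) -> 'M[B]_(p, q).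
Hypothesis Hdelta : mx_derivation n0 delta.

Lemma derivD p q (A C : 'M[B]_(p, q)) : (n0 <= p)%N -> (n0 <= q)%N ->
  delta (A + C) = delta A + delta C.
Proof. exact: Hdelta.1. Qed.

Lemma derivM p q s (A : 'M[B]_(p, q)) (C : 'M[B]_(q, s)) :
  (n0 <= p)%N -> (n0 <= q)%N -> (n0 <= s)%N -> delta (A *m C) = delta A *m C + A *m delta C.
Proof. exact: Hdelta.2. Qed.

Lemma deriv0 p q : (n0 <= p)%N -> (n0 <= q)%N -> delta (0 : 'M[B]_(p, q)) = 0.
Proof.
move=> hp hq; apply: (@addrI _ (delta (0 : 'M[B]_(p, q)))).
by rewrite -derivD // !addr0.
Qed.

Lemma derivN p q (A : 'M[B]_(p, q)) : (n0 <= p)%N -> (n0 <= q)%N -> delta (- A) = - delta A.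
Proof.
move=> hp hq; apply/eqP; rewrite -addr_eq0 -derivD //.
by rewrite addNr deriv0.
Qed.

Lemma derivB p q (A C : 'M[B]_(p, q)) : (n0 <= p)%N -> (n0 <= q)%N ->
  delta (A - C) = delta A - delta C.
Proof. by move=> hp hq; rewrite derivD // derivN. Qed.

Lemma deriv1 n : (n0 <= n)%N -> delta (1%:M : 'M[B]_n) = 0.
Proof.
move=> hn; have := derivM (1%:M : 'M[B]_n) 1%:M hn hn hn.
rewrite !mulmx1 mul1mx => h.
by apply: (@addrI _ (delta 1%:M)); rewrite addr0 -h.
Qed.

Lemma deriv_inv n (A M : 'M[B]_n) : (n0 <= n)%N -> A *m M = 1%:M -> M *m A = 1%:M ->
  delta M = - (M *m delta A *m M).
Proof.
move=> hn hAM hMA.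
have hMA' : delta M *m A = - (M *m delta A).
  by apply/eqP; rewrite -addr_eq0 -derivM // hMA deriv1.
by rewrite -[delta M]mulmx1 -hAM mulmxA hMA' mulNmx.
Qed.

End Derivation.

Section Dressing.
Variables (F : fieldType) (B : algType F) (n0 n m : nat).
Hypotheses (Hn : (n0 <= n)%N) (Hm : (n0 <= m)%N).
Variables (P K X M : 'M[B]_n) (V : 'M[B]_(n, m)) (U : 'M[B]_(m, n)).
Hypothesis Hcomm : P *m (K *m X) - (K *m X) *m P = V *m U *m X.
Hypotheses (HinvL : (1%:M - K *m X) *m M = 1%:M) (HinvR : M *m (1%:M - K *m X) = 1%:M).

(* [N = (1 - X K)^-1] *)
Let N := 1%:M + X *m M *m K.

Lemma resolvent_commutator : P *m M = M *m P + M *m V *m U *m X *m M.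
Proof.
have h1 : P *m (1%:M - K *m X) - (1%:M - K *m X) *m P = - (V *m U *m X).
  by rewrite mulmxBr mulmxBl mulmx1 mul1mx -Hcomm !opprB addrC addrA subrK.
have h2 : M *m (P *m (1%:M - K *m X) - (1%:M - K *m X) *m P) *m M = M *m P - P *m M.
  by rewrite mulmxBr mulmxBl !mulmxA -[M *m P *m _ *m M]mulmxA HinvL mulmx1 HinvR mul1mx.
rewrite h1 mulmxN mulNmx !mulmxA in h2.
move/eqP: h2; rewrite eq_sym subr_eq => /eqP ->.
by rewrite addrC addNKr.
Qed.

Lemma resolvent_commutator_mul (Y : 'M[B]_n) :
  P *m (K *m Y) - (K *m Y) *m P = V *m U *m Y ->
  P *m M *m K *m Y - M *m K *m Y *m P = M *m V *m U *m N *m Y.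
Proof.
move=> /eqP; rewrite subr_eq => /eqP hY.
rewrite resolvent_commutator !mulmxDl -!mulmxA hY /N !mulmxDl mul1mx !mulmxDr -!mulmxA.
by rewrite addrAC addrK.
Qed.

Definition dress (Y : 'M[B]_n) : 'M[B]_m := U *m (N *m Y *m M) *m V.

Lemma dressB (Y Z : 'M[B]_n) : dress (Y - Z) = dress Y - dress Z.
Proof. by rewrite /dress !(mulmxBr, mulmxBl). Qed.

Lemma dress_mul (Y Z : 'M[B]_n) : dress Y *m dress Z = dress (Y *m M *m V *m U *m N *m Z).
Proof. by rewrite /dress !mulmxA. Qed.

Section DressingDerivative.
Variable delta : forall p q, 'M[B]_(p, q) -> 'M[B]_(p, q).
Hypotheses (Hdelta : mx_derivation n0 delta)
  (HdK : delta K = 0) (HdU : delta U = 0) (HdV : delta V = 0).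

Lemma deriv_resolvent : delta M = M *m K *m delta X *m M.
Proof.
rewrite (deriv_inv Hdelta Hn HinvL HinvR) (derivB Hdelta) // (deriv1 Hdelta) //.
by rewrite (derivM Hdelta) // HdK !(mul0mx, add0r, sub0r) mulmxN mulNmx opprK !mulmxA.
Qed.

Lemma deriv_XM : delta (X *m M) = N *m delta X *m M.
Proof.
by rewrite (derivM Hdelta) // deriv_resolvent /N !mulmxDl mul1mx !mulmxA.
Qed.

Lemma deriv_N : delta N = N *m delta X *m M *m K.
Proof.
rewrite /N (derivD Hdelta) // (deriv1 Hdelta) // add0r (derivM Hdelta) //.
by rewrite HdK mulmx0 addr0 deriv_XM.
Qed.

Lemma deriv_phi : delta (U *m X *m M *m V) = dress (delta X).
Proof.
rewrite (derivM Hdelta) // HdV mulmx0 addr0 -mulmxA (derivM Hdelta) //.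
by rewrite HdU mul0mx add0r deriv_XM.
Qed.

Lemma deriv_dress (Y : 'M[B]_n) :
  delta (dress Y) = dress (delta X *m M *m K *m Y + delta Y + Y *m M *m K *m delta X).
Proof.
rewrite /dress (derivM Hdelta) // HdV mulmx0 addr0 (derivM Hdelta) // HdU mul0mx add0r.
rewrite !(derivM Hdelta) // deriv_N deriv_resolvent.
by clearbody N; rewrite !(mulmxDr, mulmxDl) !mulmxA.
Qed.

Lemma deriv_commutator (HdP : delta P = 0) :
  P *m (K *m delta X) - (K *m delta X) *m P = V *m U *m delta X.
Proof.
have := congr1 (@delta n n) Hcomm.
by rewrite (derivB Hdelta) // !(derivM Hdelta) // HdP HdK HdV HdU
  !(mul0mx, mulmx0, add0r, addr0).
Qed.

End DressingDerivative.

Section ZeroCurvature.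
Variables delta1 delta2 : forall p q, 'M[B]_(p, q) -> 'M[B]_(p, q).
Hypotheses (Hdelta1 : mx_derivation n0 delta1) (Hdelta2 : mx_derivation n0 delta2).
Hypotheses (Hd1P : delta1 P = 0) (Hd1K : delta1 K = 0) (Hd1U : delta1 U = 0)
  (Hd1V : delta1 V = 0).
Hypotheses (Hd2P : delta2 P = 0) (Hd2K : delta2 K = 0) (Hd2U : delta2 U = 0)
  (Hd2V : delta2 V = 0).
Hypothesis Hdelta12 : delta1 (delta2 X) = delta2 (delta1 X).

Lemma dress_zero_curvature :
  delta2 (dress (delta1 X *m P)) - delta1 (dress (delta2 X *m P)) =
  dress (delta1 X) *m dress (delta2 X) - dress (delta2 X) *m dress (delta1 X).
Proof.
rewrite !deriv_dress // !dress_mul -!dressB; congr (dress _).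
rewrite (derivM Hdelta2) // (derivM Hdelta1) // Hd1P Hd2P !mulmx0 !addr0 Hdelta12.
have comm1 := resolvent_commutator_mul (deriv_commutator Hdelta1 Hd1K Hd1U Hd1V Hd1P).
have comm2 := resolvent_commutator_mul (deriv_commutator Hdelta2 Hd2K Hd2U Hd2V Hd2P).
rewrite -!mulmxA in comm1 comm2; rewrite -!mulmxA -comm1 -comm2 !mulmxBr !mulmxA.
have regroup (x y z w c : 'M[B]_n) : x + c + y - (z + c + w) = (y - z) - (w - x).
  rewrite addrAC [z + c]addrC -[c + z + w]addrA addrKA opprB opprD addrAC [x + y]addrC.
  by rewrite addrACA.
exact: regroup.
Qed.

End ZeroCurvature.

End Dressing.

Theorem corollary2p4 (F : fieldType) (B : algType F) (n0 : nat)
    (d db : forall p q, ext B p q -> ext B p q)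
    (Hbidiff : bidifferential n0 d db)
    (n m : nat) (Hn : (n0 <= n)%N) (Hm : (n0 <= m)%N)
    (P K Xi : 'M[B]_n) (V : 'M[B]_(n, m)) (U : 'M[B]_(m, n))
    (HP : dconst d db P) (HK : dconst d db K)
    (HV : dconst d db V) (HU : dconst d db U)
    (HXi : db n n (emb Xi) = emul (d n n (emb Xi)) (emb P))
    (Hcomm : P *m (K *m Xi) - (K *m Xi) *m P = V *m U *m Xi)
    (Minv : 'M[B]_n)
    (Hinv1 : (1%:M - K *m Xi) *m Minv = 1%:M)
    (Hinv2 : Minv *m (1%:M - K *m Xi) = 1%:M) :
  let phi := U *m Xi *m Minv *m V in
  db m m (d m m (emb phi)) = emul (d m m (emb phi)) (d m m (emb phi)).
Proof.
move=> phi; have [Hd Hdb _] := Hbidiff.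
have [[Hd1 Hd2] [Hb1 Hb2]] := (dxi_derivation Hd, dxi_derivation Hdb).
have [dP1 dP2 _ _] := dconst_dxi HP; have [dK1 dK2 bK1 bK2] := dconst_dxi HK.
have [dV1 dV2 bV1 bV2] := dconst_dxi HV; have [dU1 dU2 bU1 bU2] := dconst_dxi HU.
have [bX1 bX2] := dxi_emul_emb Hd Hn Hn HXi.
rewrite (differential_differential_emb Hd Hdb) // (emul_differential_emb Hd) //.
rewrite (bidifferential_dxi_anticomm _ Hbidiff) //; congr (Ext 0 0 0 _).
rewrite /phi !(deriv_phi Hn Hm Hinv1 Hinv2) // bX1 bX2.
exact: (dress_zero_curvature Hn Hm Hcomm Hinv1 Hinv2 Hd1 Hd2) (dxi_comm _ Hd Hn Hn).
Qed.
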